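(* Let $T$ be a perfect tree, $\rho$ a weight on $T$ and $T_0$ a finite subtree of $T$. Let $k\in\omega$ and let $D\subseteq T^k$ be dense open. Then there is a finite subtree $T_1$ of $T$ with $T_0\lhd_\rho T_1$ such that for every $k$-element set $\{\sigma_0,\dots,\sigma_{k-1}\}\subseteq\mathrm{term}(T_0)$ and all $\sigma_0',\dots,\sigma_{k-1}'\in\mathrm{term}(T_1)$ with $\sigma_l\subseteq\sigma_l'$ for all $l<k$, we have $(\sigma_0',\dots,\sigma_{k-1}')\in D$.
   Context: Trees are subsets of $A^{<\omega}$ ($A$ countable) closed under initial segments; perfect means every node has two incomparable extensions; $T_s=\{t\in T:t\subseteq s\text{ or }s\subseteq t\}$. $T$ is viewed as a poset where longer nodes are stronger (extension), $T^k$ carries the product order, and $D\subseteq T^k$ is dense open in this poset. A weight on $T$ is a map $\rho:T\times T\to[T]^{<\omega}$ with $\rho(s,t)\subseteq T_s\setminus T_t$. For a finite tree $R$, $\mathrm{term}(R)$ is its set of terminal nodes. For finite trees, $T_0\sqsubset T_1$ means $T_0\subsetneq T_1$ and every $t\in T_1\setminus T_0$ extends some element of $\mathrm{term}(T_0)$. For finite subtrees $T_0,T_1$ of $T$, $T_0\lhd_\rho T_1$ (also written $T_1\rhd_\rho T_0$) means $T_0\sqsubset T_1$ and for every $\sigma\in\mathrm{term}(T_0)$ there are $N\ge 2$ and an injective sequence $\langle s_i:i<N\rangle$ in $(T_1)_\sigma$ with $s_0=\sigma$, $s_{N-1}\in\mathrm{term}(T_1)$ and $\rho(s_i,s_{i+1})\subseteq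 T_1$ for all $i<N-1$. *)

From HB Require Import structures.
From mathcomp Require Import all_boot.
From mathcomp Require Import finmap.
Set Implicit Arguments. Unset Strict Implicit. Unset Printing Implicit Defensive.
Local Open Scope fset_scope.

(* Nodes are finite sequences over a countable alphabet A; s ⊆ t (initial
   segment) is [prefix s t].  Trees are Prop-valued predicates on nodes;
   finite (sub)trees are finite sets {fset seq A}. *)
Section TreeDefs.
Variable A : countType.
Notation node := (seq A).

Definition is_tree (T : node -> Prop) : Prop :=
  T [::] /\ forall s t : node, prefix s t -> T t -> T s.

Definition incomparable (s t : node) : Prop := ~~ prefix s t /\ ~~ prefix t s.

Definition perfect (T : node -> Prop) : Prop :=
  forall s, T s -> exists t u, [/\ T t, T u, prefix s t, prefix s u & incomparable t u].

Definition Tcone (T : node -> Prop) (s : node) : node -> Prop :=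
  fun t => T t /\ (prefix t s \/ prefix s t).

Definition is_weight (T : node -> Prop) (rho : node -> node -> {fset node}) : Prop :=
  forall s t, T s -> T t ->
    forall u, u \in rho s t -> Tcone T s u /\ ~ Tcone T t u.

Definition finite_subtree (T : node -> Prop) (R : {fset node}) : Prop :=
  is_tree (fun t => t \in R) /\ forall t, t \in R -> T t.

Definition term (R : {fset node}) (t : node) : Prop :=
  t \in R /\ forall u, u \in R -> prefix t u -> u = t.

Definition sqsub (R0 R1 : {fset node}) : Prop :=
  R0 `<` R1 /\ forall t, t \in R1 -> t \notin R0 -> exists2 s, term R0 s & prefix s t.

(* T0 ◁_rho T1 : the sequence <s_i : i < N> is given as a list ss of length N *)
Definition lhd (rho : node -> node -> {fset node}) (R0 R1 : {fset node}) : Prop :=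
  sqsub R0 R1 /\
  forall sigma, term R0 sigma ->
    exists ss : seq node,
      [/\ 2 <= size ss /\ uniq ss,
          (forall u, u \in ss -> Tcone (fun t => t \in R1) sigma u),
          nth [::] ss 0 = sigma,
          term R1 (nth [::] ss (size ss).-1) &
          forall i, i < (size ss).-1 -> rho (nth [::] ss i) (nth [::] ss i.+1) `<=` R1].

(* D ⊆ T^k is dense open in T^k, ordered by coordinatewise extension
   (longer = stronger) *)
Definition dense_open (T : node -> Prop) (k : nat) (D : ('I_k -> node) -> Prop) : Prop :=
  [/\ (forall q, D q -> forall l, T (q l)),
      (forall p : 'I_k -> node, (forall l, T (p l)) ->
         exists q, D q /\ forall l, prefix (p l) (q l)) &
      (forall q q' : 'I_k -> node, D q -> (forall l, T (q' l)) ->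
         (forall l, prefix (q l) (q' l)) -> D q')].
End TreeDefs.

From HB Require Import structures.
From mathcomp Require Import all_boot.
From mathcomp Require Import finmap.
From Stdlib Require Import Classical IndefiniteDescription.
Set Implicit Arguments. Unset Strict Implicit. Unset Printing Implicit Defensive.
Local Open Scope fset_scope.

(* T1 is built in k+1 rounds, each of which lengthens the rho-path issuing from
   every terminal node s of T0 by one step.  In a round, every terminal node y
   of the current tree is first pushed to a strict extension G y so that every
   injective k-tuple of the G y lies in D (finitely many tuples, D dense open);
   the tip t of the path from s then moves to G t, and the finite set
   rho(t, G t) is added to the tree.  The nodes of rho(t, G t) may create
   terminal nodes above no G y, but they lie above t, which already lies above
   a node of every earlier round.  Hence every terminal node of the final tree
   misses at most one of the k+1 rounds, so k terminal nodes above distinct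
   terminal nodes of T0 all lie above nodes of one common round; these nodes
   form an injective tuple in D, and D is open. *)

Lemma pigeonhole_unique_failures (k : nat) (P : 'I_k -> nat -> Prop) :
  (forall l j1 j2, j1 < k.+1 -> j2 < k.+1 -> ~ P l j1 -> ~ P l j2 -> j1 = j2) ->
  exists2 j, j < k.+1 & forall l, P l j.
Proof.
move=> uniq_fail; apply: NNPP => no_common.
have fail_at (j : 'I_k.+1) : exists l, ~ P l j.
  apply: NNPP => all_hold; apply: no_common; exists j; first exact: ltn_ord.
  by move=> l; apply: NNPP => Pl; apply: all_hold; exists l.
have [f f_fails] := functional_choice _ fail_at.
have f_inj : injective f.
  by move=> i j fij; apply: val_inj; apply: (uniq_fail (f i)); rewrite ?ltn_ord // fij.
by have := leq_card f f_inj; rewrite !card_ord ltnn.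
Qed.

Section Prefix.
Variable A : eqType.
Implicit Types a b x : seq A.

Lemma prefix_anti a b : prefix a b -> prefix b a -> a = b.
Proof.
move=> ab ba; have size_ab : size a = size b by apply/eqP; rewrite eqn_leq !size_prefix.
by move: ab; rewrite prefixE size_ab take_size => /eqP.
Qed.

Lemma prefix_total a b x : prefix a x -> prefix b x -> prefix a b || prefix b a.
Proof.
rewrite [prefix a x]prefixE [prefix b x]prefixE => /eqP ax /eqP bx.
case: (leqP (size a) (size b)) => [ab|/ltnW ba]; apply/orP; [left|right].
  by rewrite prefixE -{2}ax -bx take_takel.
by rewrite prefixE -ax -{2}bx take_takel.
Qed.

Definition sprefix a b := prefix a b && (a != b).

Lemma sprefix_trans : transitive sprefix.
Proof.
move=> b a c /andP [ab nab] /andP [bc nbc]; rewrite /sprefix (prefix_trans ab bc).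
by apply: contraNneq nbc => eac; apply/eqP/(prefix_anti bc); rewrite -eac.
Qed.

Lemma sprefix_irr : irreflexive sprefix.
Proof. by move=> a; rewrite /sprefix eqxx andbF. Qed.

End Prefix.

Section FiniteTrees.
Variable A : countType.
Notation node := (seq A).
Implicit Types (R : {fset node}) (N : seq node).

Definition terms R : seq node :=
  [seq x <- enum_fset R | all (fun u => prefix x u ==> (u == x)) R].

Lemma termsP R x : reflect (term R x) (x \in terms R).
Proof.
rewrite mem_filter; apply: (iffP andP) => [[/allP maximal xR]|[xR maximal]].
  by split=> // u uR xu; apply/eqP; move/implyP: (maximal u uR); apply.
by split=> //; apply/allP => u uR; apply/implyP => xu; apply/eqP/maximal.
Qed.

Lemma term_sub R R' x : R `<=` R' -> x \in R -> term R' x -> term R x.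
Proof. by move=> /fsubsetP RR' xR [_ maximal]; split=> // u /RR'; apply: maximal. Qed.

Lemma term_eq R x y z : term R x -> term R y -> prefix x z -> prefix y z -> x = y.
Proof.
move=> [xR x_max] [yR y_max] xz yz.
by case/orP: (prefix_total xz yz) => [/(x_max y yR) ->|/(y_max x xR)].
Qed.

Lemma term_exists R x : x \in R -> exists y, term R y.
Proof.
move=> xR; pose x0 : R := [` xR].
case: (@arg_maxnP R x0 predT (fun u => size (val u))) => // m _ m_max.
exists (val m); split=> [|u uR mu]; first exact: fsvalP.
apply: (prefix_anti _ mu); move: mu; rewrite prefixE => /eqP <-.
by rewrite take_oversize ?prefix_refl //; apply: (m_max [` uR]).
Qed.

Definition graft R N : {fset node} :=
  R `|` seq_fset tt [seq take i x | x <- N, i <- iota 0 (size x).+1].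

Lemma graftP R N y :
  reflect (y \in R \/ exists2 x, x \in N & prefix y x) (y \in graft R N).
Proof.
rewrite in_fsetU seq_fsetE; apply: (iffP orP) => [] [->|]; try by left.
  by case/allpairsPdep => x [i [xN _ ->]]; right; exists x => //; apply: prefix_take.
case=> x xN yx; right; apply/allpairsPdep; exists x, (size y).
by rewrite mem_iota ltnS size_prefix //; move: yx; rewrite prefixE => /eqP.
Qed.

Lemma graft_subl R N : R `<=` graft R N.
Proof. exact: fsubsetUl. Qed.

Lemma graft_subr R N x : x \in N -> x \in graft R N.
Proof. by move=> xN; apply/graftP; right; exists x => //; apply: prefix_refl. Qed.

Lemma graft_tree R N : is_tree (fun x => x \in R) -> is_tree (fun x => x \in graft R N).
Proof.
move=> [rootR R_down]; split; first exact: (fsubsetP (graft_subl R N)).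
move=> a b ab /graftP [bR|[x xN bx]]; apply/graftP; first by left; apply: R_down ab bR.
by right; exists x => //; apply: prefix_trans ab bx.
Qed.

Lemma term_graft_inv R N z : term (graft R N) z -> term R z \/ z \in N.
Proof.
move=> zterm; have [/graftP [zR|[x xN zx]] z_max] := zterm.
  by left; apply: term_sub zterm; first exact: graft_subl.
by right; rewrite -(z_max x (graft_subr R xN) zx).
Qed.

Lemma term_graftI R N z : z \in graft R N ->
  (forall x, x \in R \/ x \in N -> prefix z x -> x = z) -> term (graft R N) z.
Proof.
move=> zR' z_max; split=> // u /graftP [uR|[x xN ux]] zu; first exact: z_max (or_introl uR) zu.
have xz := z_max x (or_intror xN) (prefix_trans zu ux).
by apply: prefix_anti zu; rewrite -xz.
Qed.

End FiniteTrees.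

Section Saturation.
Variables (A : countType) (T : seq A -> Prop) (k : nat) (D : ('I_k -> seq A) -> Prop).
Hypothesis D_dense : dense_open T D.
Notation node := (seq A).

Lemma dense_open_up (x y : 'I_k -> node) :
  D x -> (forall l, T (y l)) -> (forall l, prefix (x l) (y l)) -> D y.
Proof. by case: D_dense => _ _; apply. Qed.

Lemma dense_open_T (x : 'I_k -> node) l : D x -> T (x l).
Proof. by case: D_dense => inT _ _ /inT. Qed.

Lemma extend_into_dense (L : seq node) (G : node -> node) (x : 'I_k -> node) :
  injective x -> (forall l, x l \in L) -> (forall y, y \in L -> T (G y)) ->
  exists G', [/\ forall y, prefix (G y) (G' y), forall y, y \in L -> T (G' y) & D (G' \o x)].
Proof.
move=> x_inj xL GT.
have [q [Dq Gq]] : exists q, D q /\ forall l, prefix (G (x l)) (q l).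
  by case: D_dense => _ dense _; apply: dense => l; apply: GT.
pose G' y := if [pick l | x l == y] is Some l then q l else G y.
have G'x l : G' (x l) = q l.
  by rewrite /G'; case: pickP => [l' /eqP /x_inj -> //|/(_ l)]; rewrite eqxx.
exists G'; split.
- move=> y; rewrite /G'; case: pickP => [l /eqP <-|_]; [exact: Gq|exact: prefix_refl].
- move=> y yL; rewrite /G'; case: pickP => [l _|_]; [exact: dense_open_T Dq|exact: GT].
- apply: (dense_open_up Dq) => l; rewrite /= G'x ?prefix_refl //; apply: dense_open_T Dq.
Qed.

Lemma saturate (L : seq node) (G0 : node -> node) : (forall y, y \in L -> T (G0 y)) ->
  exists G, [/\ forall y, prefix (G0 y) (G y), forall y, y \in L -> T (G y) &
    forall x : 'I_k -> node, injective x -> (forall l, x l \in L) -> D (G \o x)].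
Proof.
move=> G0T.
suff [G [G0G GT Gdense]] : exists G, [/\ forall y, prefix (G0 y) (G y),
    forall y, y \in L -> T (G y) &
    forall g, g \in enum {ffun 'I_k -> seq_sub L} -> injective (fun l => ssval (g l)) ->
      D (fun l => G (ssval (g l)))].
  exists G; split=> // x x_inj xL; pose g := [ffun l => SeqSub (xL l)].
  have gx l : ssval (g l) = x l by rewrite ffunE.
  have g_inj : injective (fun l => ssval (g l)) by move=> l l' /=; rewrite !gx => /x_inj.
  apply: (dense_open_up (Gdense g _ g_inj)) => [|l|l]; rewrite ?mem_enum //=.
    by apply: GT; rewrite -gx ssvalP.
  by rewrite gx prefix_refl.
elim: (enum _) => [|g gs [G [G0G GT Gdense]]].
  by exists G0; split=> // y; apply: prefix_refl.
have [g_inj|g_ninj] := classic (injective (fun l => ssval (g l))); last first.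
  by exists G; split=> // g'; rewrite inE => /orP [/eqP ->|/Gdense].
have [G' [GG' G'T G'dense]] := extend_into_dense g_inj (fun l => ssvalP (g l)) GT.
exists G'; split=> [y|//|g'].
  exact: prefix_trans (G0G y) (GG' y).
rewrite inE => /orP [/eqP -> //|g'gs g'_inj].
apply: (dense_open_up (Gdense g' g'gs g'_inj)) => l; last exact: GG'.
by apply: G'T; apply: ssvalP.
Qed.

End Saturation.

Section Stages.
Variables (A : countType) (T : seq A -> Prop) (rho : seq A -> seq A -> {fset seq A}).
Variables (T0 : {fset seq A}) (k : nat) (D : ('I_k -> seq A) -> Prop) (ext : seq A -> seq A).
Hypotheses (T_tree : is_tree T) (rho_weight : is_weight T rho).
Hypotheses (T0_subtree : finite_subtree T T0) (D_dense : dense_open T D).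
Hypothesis ext_strict : forall s, T s -> [/\ T (ext s), prefix s (ext s) & ext s != s].
Notation node := (seq A).

Definition anchored (x : node) := exists2 s, term T0 s & prefix s x.

Definition good (W : nat -> seq node) j (x : node) := has (fun w => prefix w x) (W j).

Definition rho_step (R : {fset node}) (a b : node) :=
  [&& b \in R, sprefix a b & rho a b `<=` R].

Definition tip (chain : node -> seq node) (s : node) := last s (chain s).

(* After r rounds, W j is the set of nodes G y created in round j and chain s
   is the rho-path from s constructed so far. *)
Record stage r R W (chain : node -> seq node) : Prop := Stage {
  stage_subtree : finite_subtree T R;
  stage_T0 : T0 `<=` R;
  stage_anchored : forall x, x \in R -> x \notin T0 -> anchored x;
  stage_size : forall s, term T0 s -> size (chain s) = r;
  stage_path : forall s, term T0 s -> path (rho_step R) s (chain s);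
  stage_tip_term : forall s, term T0 s -> term R (tip chain s);
  stage_tip_good : forall s j, term T0 s -> j < r -> good W j (tip chain s);
  stage_miss_once : forall z j1 j2, term R z -> j1 < r -> j2 < r ->
    ~~ good W j1 z -> ~~ good W j2 z -> j1 = j2;
  stage_level_dense : forall j x, j < r -> injective x -> (forall l, x l \in W j) -> D x;
  stage_level_anchored : forall j w, j < r -> w \in W j -> anchored w }.

Lemma good_prefix W j x y : good W j x -> prefix x y -> good W j y.
Proof. by move=> /hasP [w wW wx] xy; apply/hasP; exists w => //; apply: prefix_trans xy. Qed.

Lemma rho_step_mono R R' : R `<=` R' -> subrel (rho_step R) (rho_step R').
Proof.
move=> /fsubsetP RR' a b /and3P [bR ab rhoR]; rewrite /rho_step RR' // ab.
by apply: fsubset_trans rhoR _; apply/fsubsetP.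
Qed.

Lemma rho_step_path_in R x c : path (rho_step R) x c -> all (mem R) c.
Proof. by elim: c x => //= b c IH x /andP [/and3P [bR _ _] /IH ->]; rewrite andbT. Qed.

Lemma rho_step_path_prefix R x c : path (rho_step R) x c -> all (prefix x) c.
Proof.
move=> xc; apply: order_path_min; first exact: prefix_trans.
by apply: sub_path xc => a b /and3P [_ /andP [] ].
Qed.

Lemma prefix_tip R chain s : path (rho_step R) s (chain s) -> prefix s (tip chain s).
Proof.
move=> /rho_step_path_prefix /allP s_below; rewrite /tip.
by case: (chain s) s_below => [|b c] /= s_below; [exact: prefix_refl|apply/s_below/mem_last].
Qed.

Lemma anchored_down u x : anchored u -> prefix x u -> x \in T0 \/ anchored x.
Proof.
case: T0_subtree => -[_ T0_down] _ [s s_term su] xu.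
case/orP: (prefix_total xu su) => [xs|sx]; last by right; exists s.
by left; apply: T0_down xs _; case: s_term.
Qed.

Lemma term_anchored R z : T0 `<=` R -> (forall x, x \in R -> x \notin T0 -> anchored x) ->
  term R z -> anchored z.
Proof.
move=> T0R R_anchored z_term; have [zR _] := z_term.
have [zT0|] := boolP (z \in T0); last exact: R_anchored.
by exists z; [apply: term_sub z_term|apply: prefix_refl].
Qed.

Lemma stage0 : stage 0 T0 (fun _ => [::]) (fun _ => [::]).
Proof. by split=> // x ->. Qed.

Section Round.
Variables (r : nat) (R : {fset node}) (W : nat -> seq node) (chain : node -> seq node).
Hypothesis st : stage r R W chain.
Variable G : node -> node.
Hypotheses (ext_G : forall y, prefix (ext y) (G y)) (G_T : forall y, y \in terms R -> T (G y)).
Hypothesis G_dense :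
  forall x : 'I_k -> node, injective x -> (forall l, x l \in terms R) -> D (G \o x).

Definition new_level := [seq G y | y <- terms R].

Definition branch_nodes :=
  flatten [seq enum_fset (rho (tip chain s) (G (tip chain s))) | s <- terms T0].

Definition next_tree := graft R (new_level ++ branch_nodes).

Definition next_levels j := if j == r then new_level else W j.

Definition next_chain s := rcons (chain s) (G (tip chain s)).

Lemma R_T x : x \in R -> T x.
Proof. by case: (stage_subtree st) => _; apply. Qed.

Lemma R_down x y : prefix x y -> y \in R -> x \in R.
Proof. by case: (stage_subtree st) => -[_ R_down] _; apply: R_down. Qed.

Lemma G_sprefix y : y \in R -> sprefix y (G y).
Proof.
move=> /R_T /ext_strict [_ y_ext ext_y]; rewrite /sprefix (prefix_trans y_ext) //.
apply: contra_neq ext_y => yG; apply: prefix_anti y_ext.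
by rewrite {2}yG.
Qed.

Lemma G_prefix y : y \in R -> prefix y (G y).
Proof. by move=> /G_sprefix /andP []. Qed.

Lemma G_not_below y x : term R y -> x \in R -> ~~ prefix (G y) x.
Proof.
move=> [yR y_max] xR; apply/negP => Gyx.
have xy := y_max x xR (prefix_trans (G_prefix yR) Gyx); subst x.
by case/andP: (G_sprefix yR) => yG /eqP; apply; apply: prefix_anti yG Gyx.
Qed.

Lemma tip_terms s : term T0 s -> tip chain s \in terms R.
Proof. by move/(stage_tip_term st)/termsP. Qed.

Lemma tip_in s : term T0 s -> tip chain s \in R.
Proof. by move/(stage_tip_term st) => []. Qed.

Lemma branch_nodesP u : u \in branch_nodes ->
  exists2 s, term T0 s & u \in rho (tip chain s) (G (tip chain s)).
Proof. by case/flatten_mapP => s /termsP s_term u_rho; exists s. Qed.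

Lemma branch_cases s u : term T0 s -> u \in rho (tip chain s) (G (tip chain s)) ->
  T u /\ (prefix u (tip chain s) \/ prefix (tip chain s) u /\ ~~ prefix (G (tip chain s)) u).
Proof.
move=> s_term u_rho; have tipR := tip_in s_term.
have [[uT tip_cmp] u_out] := rho_weight (R_T tipR) (G_T (tip_terms s_term)) u_rho.
split=> //; case: tip_cmp => [|tip_u]; [by left|right; split=> //].
by apply/negP => Gu; apply: u_out; split=> //; right.
Qed.

Lemma new_nodesP x : x \in new_level ++ branch_nodes ->
  (exists2 y, term R y & x = G y) \/
  exists2 s, term T0 s & x \in rho (tip chain s) (G (tip chain s)).
Proof.
rewrite mem_cat => /orP [/mapP [y /termsP y_term ->]|/branch_nodesP]; last by right.
by left; exists y.
Qed.

Lemma new_nodes_T x : x \in new_level ++ branch_nodes -> T x.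
Proof.
case/new_nodesP => [[y /termsP y_term ->]|[s s_term /(branch_cases s_term) []//]].
exact: G_T.
Qed.

Lemma next_tree_subtree : finite_subtree T next_tree.
Proof.
split; first by apply: graft_tree; case: (stage_subtree st).
move=> x /graftP [/R_T //|[y /new_nodes_T yT xy]].
by case: T_tree => _; apply; first exact: xy.
Qed.

Lemma R_sub_next : R `<=` next_tree.
Proof. exact: graft_subl. Qed.

Lemma G_anchored y : term R y -> anchored (G y).
Proof.
move=> y_term; have [yR _] := y_term.
have [s s_term sy] := term_anchored (stage_T0 st) (stage_anchored st) y_term.
by exists s => //; apply: prefix_trans sy (G_prefix yR).
Qed.

Lemma new_nodes_anchored x : x \in new_level ++ branch_nodes -> x \in R \/ anchored x.
Proof.
case/new_nodesP => [[y y_term ->]|[s s_term /(branch_cases s_term) [_ [x_tip|[tip_x _]]]]].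
- by right; apply: G_anchored.
- by left; apply: R_down x_tip (tip_in s_term).
- right; exists s => //.
  by apply: prefix_trans tip_x; apply: prefix_tip (stage_path st s_term).
Qed.

Lemma next_tree_anchored x : x \in next_tree -> x \notin T0 -> anchored x.
Proof.
move=> /graftP [xR|[y /new_nodes_anchored [yR|y_anch] xy]] xT0.
- exact: (stage_anchored st).
- exact: (stage_anchored st) (R_down xy yR) xT0.
- by case: (anchored_down y_anch xy) => //; rewrite (negbTE xT0).
Qed.

Lemma G_tip_in_next s : term T0 s -> G (tip chain s) \in next_tree.
Proof.
move=> s_term; apply/graft_subr; rewrite mem_cat; apply/orP; left.
by apply: map_f; apply: tip_terms.
Qed.

Lemma next_tip_term s : term T0 s -> term next_tree (G (tip chain s)).
Proof.
move=> s_term; have tip_t := stage_tip_term st s_term; have tipR := tip_in s_term.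
apply: term_graftI (G_tip_in_next s_term) _ => x.
case=> [xR|/new_nodesP [[y y_term ->]|[s' s'_term x_rho]]] Gx.
- by move: Gx; rewrite (negbTE (G_not_below tip_t xR)).
- have [yR _] := y_term.
  by rewrite (term_eq y_term tip_t (G_prefix yR) (prefix_trans (G_prefix tipR) Gx)).
have [_ [x_tip|[tip_x G_x]]] := branch_cases s'_term x_rho.
  by move: Gx; rewrite (negbTE (G_not_below tip_t (R_down x_tip (tip_in s'_term)))).
have sx : prefix s x.
  exact: prefix_trans (prefix_tip (stage_path st s_term)) (prefix_trans (G_prefix tipR) Gx).
have s'x := prefix_trans (prefix_tip (stage_path st s'_term)) tip_x.
by move: G_x; rewrite -(term_eq s_term s'_term sx s'x) Gx.
Qed.

Lemma next_term_cases z : term next_tree z ->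
  (exists2 y, term R y & prefix (G y) z) \/ exists2 s, term T0 s & prefix (tip chain s) z.
Proof.
move=> z_term; have [_ z_max] := z_term.
have from_R : z \in R -> exists2 y, term R y & prefix (G y) z.
  move=> zR; have z_termR := term_sub R_sub_next zR z_term.
  exists z => //; rewrite (z_max (G z)) ?prefix_refl ?G_prefix //.
  by apply/graft_subr; rewrite mem_cat map_f //; apply/termsP.
case: (term_graft_inv z_term) => [[zR _]|/new_nodesP [[y y_term ->]|[s s_term]]].
- by left; apply: from_R.
- by left; exists y => //; apply: prefix_refl.
case/(branch_cases s_term) => _ [z_tip|[tip_z _]]; last by right; exists s.
by left; apply: from_R; apply: R_down z_tip (tip_in s_term).
Qed.

Lemma next_levels_old j : j != r -> next_levels j = W j.
Proof. by rewrite /next_levels => /negbTE ->. Qed.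

Lemma next_miss_once z j1 j2 : term next_tree z -> j1 < r.+1 -> j2 < r.+1 ->
  ~~ good next_levels j1 z -> ~~ good next_levels j2 z -> j1 = j2.
Proof.
move=> z_term; rewrite ltnS leq_eqVlt => j1r; rewrite ltnS leq_eqVlt => j2r.
case: (next_term_cases z_term) => [[y y_term Gyz]|[s s_term tip_z]].
  have z_new : good next_levels r z.
    apply/hasP; exists (G y) => //; rewrite /next_levels eqxx.
    by apply: map_f; apply/termsP.
  have [yR _] := y_term.
  have y_miss j : j < r -> ~~ good next_levels j z -> ~~ good W j y.
    move=> jr; rewrite /good next_levels_old ?(ltn_eqF jr) //; apply: contra => y_good.
    exact: good_prefix y_good (prefix_trans (G_prefix yR) Gyz).
  case/orP: j1r => [/eqP ->|j1r]; first by rewrite z_new.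
  case/orP: j2r => [/eqP ->|j2r]; first by rewrite z_new.
  by move=> /(y_miss _ j1r) miss1 /(y_miss _ j2r); apply: (stage_miss_once st y_term).
have z_old j : j < r -> good next_levels j z.
  move=> jr; rewrite /good next_levels_old ?(ltn_eqF jr) //.
  exact: good_prefix (stage_tip_good st s_term jr) tip_z.
by case/orP: j1r => [/eqP ->|/z_old ->]; case/orP: j2r => [/eqP ->|/z_old ->].
Qed.

Lemma next_level_dense j x :
  j < r.+1 -> injective x -> (forall l, x l \in next_levels j) -> D x.
Proof.
move=> jr x_inj; rewrite /next_levels; case: eqP => [_|/eqP jnr] x_lev; last first.
  by apply: (stage_level_dense st _ x_inj x_lev); rewrite ltn_neqAle jnr -ltnS.
have [y xy] : exists y : 'I_k -> node, forall l, y l \in terms R /\ x l = G (y l).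
  apply: (functional_choice (fun l y => y \in terms R /\ x l = G y)) => l.
  by have /mapP [y yR ->] := x_lev l; exists y.
have y_inj : injective y by move=> l l' yy; apply: x_inj; rewrite !(proj2 (xy _)) yy.
apply: (dense_open_up D_dense (G_dense y_inj (fun l => proj1 (xy l)))) => l /=.
  by rewrite (proj2 (xy l)); apply: G_T (proj1 (xy l)).
by rewrite (proj2 (xy l)) prefix_refl.
Qed.

Lemma next_level_anchored j w : j < r.+1 -> w \in next_levels j -> anchored w.
Proof.
move=> jr; rewrite /next_levels; case: eqP => [_ /mapP [y /termsP y_term ->]|/eqP jnr].
  exact: G_anchored.
by apply: (stage_level_anchored st); rewrite ltn_neqAle jnr -ltnS.
Qed.

Lemma tip_next_chain s : tip next_chain s = G (tip chain s).
Proof. exact: last_rcons. Qed.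

Lemma stage_next : stage r.+1 next_tree next_levels next_chain.
Proof.
split.
- exact: next_tree_subtree.
- exact: fsubset_trans (stage_T0 st) R_sub_next.
- exact: next_tree_anchored.
- by move=> s s_term; rewrite size_rcons (stage_size st).
- move=> s s_term; rewrite rcons_path.
  rewrite (sub_path (rho_step_mono R_sub_next)) ?(stage_path st) //=.
  rewrite /rho_step G_tip_in_next // G_sprefix ?tip_in //=; apply/fsubsetP => u u_rho.
  apply/graft_subr; rewrite mem_cat; apply/orP; right; apply/flatten_mapP.
  by exists s; [apply/termsP|].
- by move=> s s_term; rewrite tip_next_chain; apply: next_tip_term.
- move=> s j s_term; rewrite tip_next_chain ltnS leq_eqVlt => /orP [/eqP ->|jr].
    apply/hasP; exists (G (tip chain s)); last exact: prefix_refl.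
    by rewrite /next_levels eqxx map_f // tip_terms.
  rewrite /good next_levels_old ?(ltn_eqF jr) //.
  exact: good_prefix (stage_tip_good st s_term jr) (G_prefix (tip_in s_term)).
- exact: next_miss_once.
- exact: next_level_dense.
- exact: next_level_anchored.
Qed.

End Round.

Lemma stage_succ r R W chain : stage r R W chain ->
  exists R' W' chain', stage r.+1 R' W' chain'.
Proof.
move=> st; have ext_T y : y \in terms R -> T (ext y).
  by move=> /termsP [yR _]; case: (ext_strict (R_T st yR)).
have [G [ext_G G_T G_dense]] := saturate D_dense ext_T.
by do 3 eexists; apply: (stage_next st ext_G G_T G_dense).
Qed.

Lemma stage_exists r : exists R W chain, stage r R W chain.
Proof.
elim: r => [|r [R [W [chain /stage_succ //]]]].
by do 3 eexists; apply: stage0.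
Qed.

Lemma stage_sqsub r R W chain : stage r.+1 R W chain -> sqsub T0 R.
Proof.
move=> st; split; last first.
  by move=> t tR tT0; have [s s_term s_t] := stage_anchored st tR tT0; exists s.
rewrite fproperEneq (stage_T0 st) andbT.
have [s0 s0_term] : exists s, term T0 s.
  by case: T0_subtree => -[root _] _; apply: term_exists root.
have := stage_path st s0_term; have := stage_size st s0_term.
case: (chain s0) => // b c _ /= /andP [/and3P [bR /andP [s0b s0_ne_b] _] _].
apply: contraNneq s0_ne_b => T0R; have [_ s0_max] := s0_term.
by rewrite (s0_max b) // T0R.
Qed.

Lemma stage_lhd r R W chain : stage r.+1 R W chain -> lhd rho T0 R.
Proof.
move=> st; split; first exact: stage_sqsub st.
move=> s s_term; exists (s :: chain s); have s_path := stage_path st s_term; split.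
- split; first by rewrite /= (stage_size st s_term).
  apply: (sorted_uniq (@sprefix_trans _) (@sprefix_irr _)).
  by apply: (sub_path _ s_path) => a b /and3P [].
- move=> u; rewrite inE => /orP [/eqP ->|u_chain].
    by split; [apply: (fsubsetP (stage_T0 st)); case: s_term|right; apply: prefix_refl].
  split; first exact: (allP (rho_step_path_in s_path)).
  by right; apply: (allP (rho_step_path_prefix s_path)).
- by [].
- by rewrite nth_last; apply: (stage_tip_term st).
- by move=> i i_lt; move/pathP: s_path => /(_ [::] i i_lt) /and3P [].
Qed.

Lemma stage_dense R W chain : stage k.+1 R W chain ->
  forall sigma sigma' : 'I_k -> node, injective sigma -> (forall l, term T0 (sigma l)) ->
    (forall l, term R (sigma' l)) -> (forall l, prefix (sigma l) (sigma' l)) -> D sigma'.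
Proof.
move=> st sigma sigma' sigma_inj sigma_term sigma'_term sigma_pre.
have miss_once l j1 j2 : j1 < k.+1 -> j2 < k.+1 ->
    ~ good W j1 (sigma' l) -> ~ good W j2 (sigma' l) -> j1 = j2.
  by move=> j1k j2k /negP m1 /negP m2; apply: (stage_miss_once st (sigma'_term l) j1k j2k).
have [j jk all_good] := pigeonhole_unique_failures miss_once.
have [w w_spec] : exists w : 'I_k -> node, forall l, w l \in W j /\ prefix (w l) (sigma' l).
  apply: (functional_choice (fun l w => w \in W j /\ prefix w (sigma' l))) => l.
  by have /hasP [w wW wsigma'] := all_good l; exists w.
have w_sigma l s : term T0 s -> prefix s (w l) -> s = sigma l.
  move=> s_term sw.
  exact: term_eq s_term (sigma_term l) (prefix_trans sw (w_spec l).2) (sigma_pre l).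
have w_inj : injective w.
  move=> l l' ww; apply: sigma_inj.
  have [s s_term sw] := stage_level_anchored st jk (w_spec l).1.
  by rewrite -(w_sigma l s s_term sw) (w_sigma l' s s_term) -?ww.
apply: (dense_open_up D_dense (stage_level_dense st jk w_inj (fun l => (w_spec l).1))) => l.
  by case: (sigma'_term l) => /(R_T st).
exact: (w_spec l).2.
Qed.

End Stages.

Lemma perfect_strict_ext (A : countType) (T : seq A -> Prop) : perfect T ->
  exists ext, forall s, T s -> [/\ T (ext s), prefix s (ext s) & ext s != s].
Proof.
move=> T_perfect.
apply: (functional_choice (fun s t => T s -> [/\ T t, prefix s t & t != s])) => s.
have [sT|sNT] := classic (T s); last by exists s.
have [t [u [tT _ st su [tu _]]]] := T_perfect s sT.
by exists t => _; split=> //; apply: contraNneq tu => ->.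
Qed.

Theorem lemma4p15 (A : countType) (T : seq A -> Prop)
  (rho : seq A -> seq A -> {fset seq A}) (T0 : {fset seq A})
  (k : nat) (D : ('I_k -> seq A) -> Prop) :
  is_tree T -> perfect T -> is_weight T rho -> finite_subtree T T0 ->
  dense_open T D ->
  exists T1 : {fset seq A},
    [/\ finite_subtree T T1, lhd rho T0 T1 &
        forall sigma sigma' : 'I_k -> seq A,
          injective sigma ->
          (forall l, term T0 (sigma l)) ->
          (forall l, term T1 (sigma' l)) ->
          (forall l, prefix (sigma l) (sigma' l)) ->
          D sigma'].
Proof.
move=> T_tree T_perfect rho_weight T0_subtree D_dense.
have [ext ext_strict] := perfect_strict_ext T_perfect.
have [T1 [W [chain st]]] := stage_exists T_tree rho_weight T0_subtree D_dense ext_strict k.+1.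
exists T1; split; [exact: stage_subtree st|exact: stage_lhd st|exact: stage_dense st].
Qed.
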